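(* Let $A\in\mathbb R^{n\times n}$ be Hurwitz, $L\in\mathbb R^{n\times m}$, and $G_{yv}(s):=(sI-A)^{-1}L$. Let $P,\overline P,P^\dagger,\overline P^\dagger$ be matrices with $PP^\dagger=I$, $\overline P\,\overline P^\dagger=I$ satisfying: (C1) $P^\dagger P+\overline P^\dagger\overline P=I_n$; (C2) $PAP^\dagger$ and $\overline PA\overline P^\dagger$ are Hurwitz; (C3) $PL=0$ and $\overline PL$ is nonsingular. Define $$X(s):=P-(sI-PAP^\dagger)^{-1}PA\overline P^\dagger\overline P.$$ Then a transfer matrix $Q\in\mathcal{RH}_\infty$ (with $n$ columns) satisfies $Q\,G_{yv}=0$ if and only if there exists $\hat Q\in\mathcal{RH}_\infty$ such that $Q=\hat QX$.
   Context: $\mathcal{RH}_\infty$ denotes the set of stable, proper, real rational transfer matrices. A square real matrix is Hurwitz if all its eigenvalues have negative real part. *)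

From HB Require Import structures.
From mathcomp Require Import all_boot all_order all_algebra fraction.
Set Implicit Arguments. Unset Strict Implicit. Unset Printing Implicit Defensive.
Import Order.TTheory GRing.Theory Num.Theory.
Local Open Scope ring_scope.

(* The ground field: C is an (abstract) algebraically closed numeric field
   (e.g. the complex numbers); "real" numbers are its elements satisfying
   [Num.real]. *)

Notation ratf C := {fraction {poly C}}.
Notation "x %:F" := (@FracField.tofrac _ x) : ring_scope.

(* Real matrices: library notation [M \is a realmx] (= mxOver Num.real). *)

Definition hurwitz (C : numClosedFieldType) n (A : 'M[C]_n) : Prop :=
  forall lam : C, eigenvalue A lam -> 'Re lam < 0.

Definition RHinf_scalar (C : numClosedFieldType) (f : ratf C) : Prop :=
  exists (p q : {poly C}),
    p \is a polyOver Num.real /\ q \is a polyOver Num.real /\ q != 0 /\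
    (size p <= size q)%N /\
    (forall z : C, root q z -> 'Re z < 0) /\
    f = (p%:F) / (q%:F).

Definition RHinf (C : numClosedFieldType) k n (Q : 'M[ratf C]_(k, n)) : Prop :=
  forall i j, RHinf_scalar (Q i j).

Definition cmx (C : numClosedFieldType) m n (M : 'M[C]_(m, n)) : 'M[ratf C]_(m, n) :=
  map_mx (fun a : C => (a%:P)%:F) M.

Definition svar (C : numClosedFieldType) : ratf C := ('X)%:F.

Definition resolvent (C : numClosedFieldType) n (M : 'M[C]_n) : 'M[ratf C]_n :=
  invmx ((svar C)%:M - cmx M).

From HB Require Import structures.
From mathcomp Require Import all_boot all_order all_algebra fraction.
Set Implicit Arguments. Unset Strict Implicit. Unset Printing Implicit Defensive.
Import Order.TTheory GRing.Theory Num.Theory.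
Local Open Scope ring_scope.

(* With B(s) := sI - P A P^dagger, condition (C1) gives
   B(s) P - P A Pbar^dagger Pbar = P (sI - A), i.e. X(s) = B(s)^-1 P (sI - A);
   hence X G_yv = B^-1 P L = 0 by (C3), and so Qhat X G_yv = 0.
   Conversely, if Q G_yv = 0 then W := Q (sI - A)^-1 satisfies W L = 0; writing
   W L = W Pbar^dagger (Pbar L) shows W Pbar^dagger = 0, so W = W P^dagger P by (C1),
   whence Q = W P^dagger P (sI - A) = Q P^dagger X.  Qhat := Q P^dagger lies in
   RH_infinity because P^dagger is a real constant matrix. *)

Section Factorization.
Variables (F : fieldType) (n m p : nat) (c : F).
Variables (A : 'M[F]_n) (L : 'M[F]_(n, m)).
Variables (P : 'M[F]_(p, n)) (Pd : 'M[F]_(n, p)).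
Variables (Pb : 'M[F]_(m, n)) (Pbd : 'M[F]_(n, m)).
Hypothesis PPd : P *m Pd = 1%:M.
Hypothesis PdP_PbdPb : Pd *m P + Pbd *m Pb = 1%:M.
Hypothesis PL : P *m L = 0.
Hypothesis PbL_unit : Pb *m L \in unitmx.
Hypothesis cA_unit : c%:M - A \in unitmx.
Hypothesis cB_unit : c%:M - P *m A *m Pd \in unitmx.

Let B := c%:M - P *m A *m Pd.
Let X := P - invmx B *m (P *m A *m Pbd *m Pb).

Lemma factorE : X = invmx B *m P *m (c%:M - A).
Proof.
rewrite -mulmxA; apply: (canRL (mulKmx cB_unit)).
rewrite mulmxBr mulmxA mulmxV // mul1mx /B mulmxBl mulmxBr mul_scalar_mx mul_mx_scalar.
by rewrite -[in RHS](mulmx1 (P *m A)) -PdP_PbdPb mulmxDr !mulmxA opprD addrA.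
Qed.

Lemma factor_annihilates : X *m (invmx (c%:M - A) *m L) = 0.
Proof.
by rewrite factorE -!mulmxA mulKVmx // PL !mulmx0.
Qed.

Lemma left_kernel_PdP_fixed k (W : 'M[F]_(k, n)) : W *m L = 0 -> W *m Pd *m P = W.
Proof.
move=> WL; have WPbd : W *m Pbd = 0.
  have : W *m (Pd *m P + Pbd *m Pb) *m L = 0 by rewrite PdP_PbdPb mulmx1.
  rewrite mulmxDr mulmxDl -!mulmxA PL !mulmx0 add0r !mulmxA -mulmxA.
  by move/(congr1 (mulmx^~ (invmx (Pb *m L)))); rewrite mulmxK // mul0mx.
by rewrite -[RHS]mulmx1 -PdP_PbdPb mulmxDr !mulmxA WPbd mul0mx addr0.
Qed.

Lemma compress_scalar_sub : P *m (c%:M - A) *m Pd = B.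
Proof.
by rewrite mulmxBr mulmxBl mul_mx_scalar -scalemxAl PPd scalemx1.
Qed.

Lemma left_kernel_factors_through k (Q : 'M[F]_(k, n)) :
  Q *m (invmx (c%:M - A) *m L) = 0 -> Q = Q *m Pd *m X.
Proof.
rewrite mulmxA => /left_kernel_PdP_fixed WPdP.
have QW : Q = Q *m invmx (c%:M - A) *m Pd *m P *m (c%:M - A).
  by rewrite WPdP mulmxKV.
have QPd : Q *m Pd = Q *m invmx (c%:M - A) *m Pd *m B.
  by rewrite -compress_scalar_sub !mulmxA -QW.
by rewrite factorE !mulmxA QPd mulmxK // -QW.
Qed.
End Factorization.

Section TransferMatrices.
Variable C : numClosedFieldType.
Implicit Types (p q : {poly C}) (f g : ratf C).

Lemma cmxE m n (M : 'M[C]_(m, n)) : cmx M = map_mx (@tofrac _ \o polyC) M.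
Proof. by []. Qed.

Lemma cmxM m n r (M : 'M[C]_(m, n)) (N : 'M[C]_(n, r)) : cmx (M *m N) = cmx M *m cmx N.
Proof. by rewrite !cmxE map_mxM. Qed.

Lemma cmx1 n : cmx (1%:M : 'M[C]_n) = 1%:M.
Proof. by rewrite cmxE map_scalar_mx rmorph1. Qed.

Lemma cmx0 m n : cmx (0 : 'M[C]_(m, n)) = 0.
Proof. by rewrite cmxE map_mx0. Qed.

Lemma cmxD m n (M N : 'M[C]_(m, n)) : cmx (M + N) = cmx M + cmx N.
Proof. by rewrite !cmxE map_mxD. Qed.

Lemma cmx_unit n (M : 'M[C]_n) : (cmx M \in unitmx) = (M \in unitmx).
Proof. by rewrite cmxE map_unitmx. Qed.

Lemma sI_sub_cmx_unit n (M : 'M[C]_n) : (svar C)%:M - cmx M \in unitmx.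
Proof.
have -> : (svar C)%:M - cmx M = map_mx (@tofrac _) (char_poly_mx M).
  by rewrite /char_poly_mx map_mxB map_scalar_mx /cmx -map_mx_comp.
by rewrite unitmxE det_map_mx unitfE tofrac_eq0 monic_neq0 ?char_poly_monic.
Qed.

(* Stated so that [rpredD], [rpredM], ... find the closure instances of the
   real predicate, which they do not see through the [Num.real] qualifier. *)
Lemma polyOver_realE p : (p \is a polyOver Num.real) = (p \in polyOver (@Num.Def.real_num_pred C)).
Proof. by []. Qed.

Lemma RHinf_scalar0 : RHinf_scalar (0 : ratf C).
Proof.
exists 0, 1; rewrite !polyOver_realE rpred0 rpred1 oner_neq0 size_poly0 tofrac0 mul0r.
by do !split=> //; move=> z; rewrite rootC oner_eq0.
Qed.

Lemma RHinf_scalarD f g : RHinf_scalar f -> RHinf_scalar g -> RHinf_scalar (f + g).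
Proof.
move=> [p1 [q1 [p1R [q1R [q1_neq0 [le_p1q1 [q1_stable ->]]]]]]].
move=> [p2 [q2 [p2R [q2R [q2_neq0 [le_p2q2 [q2_stable ->]]]]]]].
rewrite !polyOver_realE in p1R q1R p2R q2R.
exists (p1 * q2 + p2 * q1), (q1 * q2); rewrite !polyOver_realE !(rpredD, rpredM) ?mulf_neq0 //.
do !split.
- rewrite (leq_trans (size_polyD _ _)) // geq_max (size_mul q1_neq0 q2_neq0).
  apply/andP; split; apply: leq_trans (size_polyMleq _ _) _; rewrite -!subn1 leq_sub2r //.
    by rewrite leq_add2r.
  by rewrite addnC leq_add2l.
- by move=> z; rewrite rootM => /orP[/q1_stable|/q2_stable].
- by rewrite tofracD !tofracM addf_div ?tofrac_eq0.
Qed.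

Lemma RHinf_scalarMc f c : c \is Num.real -> RHinf_scalar f -> RHinf_scalar (f * (c%:P)%:F).
Proof.
move=> cR [p [q [pR [qR [q_neq0 [le_pq [q_stable ->]]]]]]].
rewrite polyOver_realE in pR.
exists (c%:P * p), q; rewrite !polyOver_realE rpredM ?polyOverC //; do !split => //.
- by rewrite mul_polyC (leq_trans (size_scale_leq _ _)).
- by rewrite tofracM mulrAC (mulrC p%:F).
Qed.

Lemma RHinf_mul_realmx k n r (Q : 'M[ratf C]_(k, n)) (M : 'M[C]_(n, r)) :
  M \is a realmx -> RHinf Q -> RHinf (Q *m cmx M).
Proof.
move=> /mxOverP MR QR i j; rewrite !mxE.
apply: (big_ind (@RHinf_scalar C)); [exact: RHinf_scalar0 | exact: RHinf_scalarD |].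
by move=> l _; rewrite mxE; apply: RHinf_scalarMc.
Qed.

End TransferMatrices.

Theorem lemma3 (C : numClosedFieldType) (n m p : nat)
  (A : 'M[C]_n) (L : 'M[C]_(n, m))
  (P : 'M[C]_(p, n)) (Pd : 'M[C]_(n, p))
  (Pb : 'M[C]_(m, n)) (Pbd : 'M[C]_(n, m)) :
  A \is a realmx -> L \is a realmx -> P \is a realmx -> Pd \is a realmx -> Pb \is a realmx -> Pbd \is a realmx ->
  hurwitz A ->
  P *m Pd = 1%:M ->
  Pb *m Pbd = 1%:M ->
  Pd *m P + Pbd *m Pb = 1%:M ->
  hurwitz (P *m A *m Pd) -> hurwitz (Pb *m A *m Pbd) ->
  P *m L = 0 -> Pb *m L \in unitmx ->
  let Gyv := resolvent A *m cmx L in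
  let X := cmx P - resolvent (P *m A *m Pd) *m cmx (P *m A *m Pbd *m Pb) in
  forall (k : nat) (Q : 'M[{fraction {poly C}}]_(k, n)),
    RHinf Q ->
    (Q *m Gyv = 0 <->
     exists Qh : 'M[{fraction {poly C}}]_(k, p), RHinf Qh /\ Q = Qh *m X).
Proof.
move=> _ _ _ Pd_real _ _ _ PPd _ PdP_PbdPb _ _ PL PbL_unit Gyv X k Q Q_RH.
have PPd' : cmx P *m cmx Pd = 1%:M by rewrite -cmxM PPd cmx1.
have PdP_PbdPb' : cmx Pd *m cmx P + cmx Pbd *m cmx Pb = 1%:M.
  by rewrite -!cmxM -cmxD PdP_PbdPb cmx1.
have PL' : cmx P *m cmx L = 0 by rewrite -cmxM PL cmx0.
have PbL_unit' : cmx Pb *m cmx L \in unitmx by rewrite -cmxM cmx_unit.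
have sA_unit := sI_sub_cmx_unit A.
have sB_unit := sI_sub_cmx_unit (P *m A *m Pd); rewrite !cmxM in sB_unit.
rewrite /Gyv /X /resolvent !cmxM; split=> [QG | [Qh [_ ->]]].
- exists (Q *m cmx Pd); split; first exact: RHinf_mul_realmx.
  exact: (left_kernel_factors_through PPd' PdP_PbdPb' PL' PbL_unit' sA_unit sB_unit QG).
- by rewrite -mulmxA (factor_annihilates PdP_PbdPb' PL' sA_unit sB_unit) mulmx0.
Qed.
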